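(* Consider shadow estimation with random sampling of $g$ from the Clifford group $\mathrm{Cl}_n$ according to an arbitrary probability distribution $p$ such that $S$ is invertible, with noise channels $\Lambda(g)$. Then for an observable $O$ and a state $\rho$ the second moment of the estimator is $$\mathbb{E}(\hat o^2)=\frac1{\sqrt d}\sum_{\substack{a,a'\in\mathbb{F}_2^{2n}:\\ [a,a']=0}}\frac{s_{a,a'}}{s_as_{a'}}(O|\hat\sigma_a)(O|\hat\sigma_{a'})\,(\hat\sigma_{a+a'}|\bar\Lambda_{a,a'}|\rho).$$
   Context: $d=2^n$; $(A|B)=\mathrm{Tr}(A^\dagger B)$, $(A|\mathcal X|B)=\mathrm{Tr}(A^\dagger\mathcal X(B))$; $|A)(B|$ is $C\mapsto(B|C)A$; $\omega(g)(A)=gAg^\dagger$, $\omega(g)^\dagger(A)=g^\dagger Ag$; $E_x=|x\rangle\langle x|$, $M=\sum_x|E_x)(E_x|$, $S=\sum_gp(g)\omega(g)^\dagger M\omega(g)$. Protocol: $g\sim p$, apply $\omega(g)\Lambda(g)$ to $\rho$, measure computational basis obtaining $x$ with probability $\langle x|\omega(g)\Lambda(g)(\rho)|x\rangle$; estimator $\hat o(g,x)=(O|S^{-1}\omega(g)^\dagger|E_x)$. Paulis $\sigma_a$, $a\in\mathbb{F}_2^{2n}$ (per qubit $\sigma_{00}=\mathbb 1,\sigma_{01}=X,\sigma_{11}=Y,\sigma_{10}=Z$), $\hat\sigma_a=\sigma_a/\sqrt d$; $[a,a']=0$ iff $\sigma_a,\sigma_{a'}$ commute, and then $\sigma_a\sigma_{a'}=(-1)^{\beta(a,a')}\sigma_{a+a'}$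 (addition mod 2). $Z_z=\bigotimes_iZ^{z_i}$; $\Xi_z(g)$ is the Pauli $\sigma_b$ with $g^\dagger Z_zg=\pm\sigma_b$. $s_a=\sum_z\sum_{g:\Xi_z(g)=\sigma_a}p(g)$. For commuting $a,a'$: $r_{a,a'}=\sum_{z,z'\in\mathbb{F}_2^n}\sum_{g:\Xi_z(g)=\sigma_a,\Xi_{z'}(g)=\sigma_{a'}}p(g)$, $s_{a,a'}=(-1)^{\beta(a,a')}r_{a,a'}$, $\bar\Lambda_{a,a'}=r_{a,a'}^{-1}\sum_{z,z'}\sum_{g:\Xi_z(g)=\sigma_a,\Xi_{z'}(g)=\sigma_{a'}}p(g)\Lambda(g)$ (terms with $r_{a,a'}=0$ vanish). *)

From HB Require Import structures.
From mathcomp Require Import all_boot all_order all_algebra.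
Set Implicit Arguments. Unset Strict Implicit. Unset Printing Implicit Defensive.
Import Order.TTheory GRing.Theory Num.Theory.
Local Open Scope ring_scope.

Section Defs.
Variable C : numClosedFieldType.
Variable n : nat.

Definition qdim := (2 ^ n)%N.
Definition Mat := 'M[C]_qdim.

Definition adj (A : Mat) : Mat := (map_mx (fun z => z^*) A)^T.

Definition hs (A B : Mat) : C := \tr (adj A *m B).

Definition unitary_mat (g : Mat) : Prop := g *m adj g = 1%:M /\ adj g *m g = 1%:M.

Definition qbit (i : 'I_qdim) (k : 'I_n) : 'I_2 := inord (odd (i %/ 2 ^ k)).

(* Pauli labels a in F_2^{2n}: per qubit a pair of bits, with
   (false,false) = 1, (false,true) = X, (true,true) = Y, (true,false) = Z *)
Definition plabel := {ffun 'I_n -> bool * bool}.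

Definition pauli1 (b : bool * bool) : 'M[C]_2 :=
  match b with
  | (false, false) => \matrix_(i < 2, j < 2) (if i == j then 1 else 0)
  | (false, true)  => \matrix_(i < 2, j < 2) (if i == j then 0 else 1)
  | (true, true)   => \matrix_(i < 2, j < 2)
                        (if i == j then 0 else if (i : nat) == 0%N then - 'i else 'i)
  | (true, false)  => \matrix_(i < 2, j < 2)
                        (if i == j then (if (i : nat) == 0%N then 1 else -1) else 0)
  end.

Definition pauli (a : plabel) : Mat :=
  \matrix_(i, j) \prod_(k < n) pauli1 (a k) (qbit i k) (qbit j k).

Definition npauli (a : plabel) : Mat := (sqrtC (qdim%:R : C))^-1 *: pauli a.

Definition padd (a b : plabel) : plabel :=
  [ffun k => (xorb (a k).1 (b k).1, xorb (a k).2 (b k).2)].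

(* [a,a'] = 0  iff sigma_a and sigma_a' commute *)
Definition pcomm (a b : plabel) : bool := pauli a *m pauli b == pauli b *m pauli a.

(* beta(a,a'): sigma_a sigma_a' = (-1)^beta sigma_{a+a'} *)
Definition pbeta (a b : plabel) : bool := pauli a *m pauli b == - pauli (padd a b).

Definition Zlabel (z : {ffun 'I_n -> bool}) : plabel := [ffun k => (z k, false)].
Definition Zop (z : {ffun 'I_n -> bool}) : Mat := pauli (Zlabel z).

Definition clifford (g : Mat) : Prop :=
  unitary_mat g /\ forall a, exists b, g *m pauli a *m adj g = pauli b \/
                                   g *m pauli a *m adj g = - pauli b.

(* Xi_z(g) = sigma_b  iff  g^dagger Z_z g = +- sigma_b *)
Definition Xi (z : {ffun 'I_n -> bool}) (g : Mat) (b : plabel) : bool :=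
  (adj g *m Zop z *m g == pauli b) || (adj g *m Zop z *m g == - pauli b).

Definition Eb (x : 'I_qdim) : Mat := delta_mx x x.

Definition omega (g A : Mat) : Mat := g *m A *m adj g.
Definition omegaD (g A : Mat) : Mat := adj g *m A *m g.

Definition Mmeas (A : Mat) : Mat := \sum_(x : 'I_qdim) hs (Eb x) A *: Eb x.

Section Distribution.
(* a (finitely supported) distribution p on Clifford unitaries:
   sample index i with probability p i, unitary_mat g i, noise Lam i *)
Variable I : finType.
Variables (p : I -> C) (g : I -> Mat) (Lam : I -> Mat -> Mat).

Definition Sframe (A : Mat) : Mat := \sum_i p i *: omegaD (g i) (Mmeas (omega (g i) A)).

Definition s1 (a : plabel) : C :=
  \sum_(z : {ffun 'I_n -> bool}) \sum_(i | Xi z (g i) a) p i.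

Definition r2 (a a' : plabel) : C :=
  \sum_(z : {ffun 'I_n -> bool}) \sum_(z' : {ffun 'I_n -> bool})
     \sum_(i | Xi z (g i) a && Xi z' (g i) a') p i.

Definition s2 (a a' : plabel) : C := (-1) ^+ pbeta a a' * r2 a a'.

(* bar Lambda_{a,a'} (with 0^-1 = 0, so it vanishes when r_{a,a'} = 0) *)
Definition Lambar (a a' : plabel) (A : Mat) : Mat :=
  (r2 a a')^-1 *: \sum_(z : {ffun 'I_n -> bool}) \sum_(z' : {ffun 'I_n -> bool})
     \sum_(i | Xi z (g i) a && Xi z' (g i) a') p i *: Lam i A.

Definition estimator (Sinv : Mat -> Mat) (O : Mat) (i : I) (x : 'I_qdim) : C :=
  hs O (Sinv (omegaD (g i) (Eb x))).

Definition outprob (rho : Mat) (i : I) (x : 'I_qdim) : C :=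
  (omega (g i) (Lam i rho)) x x.

Definition second_moment (Sinv : Mat -> Mat) (O rho : Mat) : C :=
  \sum_i p i * \sum_(x : 'I_qdim) outprob rho i x * (estimator Sinv O i x) ^+ 2.

End Distribution.

Definition herm_mat (A : Mat) : Prop := adj A = A.
Definition density_mat (rho : Mat) : Prop :=
  herm_mat rho /\ (forall v : 'cV[C]_qdim, 0 <= (((map_mx (fun z => z^*) v)^T) *m rho *m v) 0 0) /\ \tr rho = 1.

End Defs.

From mathcomp Require Import all_boot all_order all_algebra.
From mathcomp Require Import ring.
Import Order.TTheory GRing.Theory Num.Theory.
Local Open Scope ring_scope.

(* The Paulis are an orthogonal basis, (sigma_a | sigma_b) = d [a = b].  A
   Clifford g maps sigma_a to +- sigma_b; the measurement channel M keeps it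
   when sigma_b is diagonal, i.e. a Z-string, which happens exactly when
   Xi_z(g) = sigma_a for some (necessarily unique) z, and kills it otherwise.
   Hence S is diagonal in the Pauli basis with eigenvalues s_a, and
   o(g,x) = sum_a (O|sigma_a) <x|g sigma_a g^dag|x> / (d s_a).  In the square
   of the estimator, the sum over outcomes x of
   <x|g Lambda(g)(rho) g^dag|x> <x|g sigma_a g^dag|x> <x|g sigma_a' g^dag|x>
   vanishes unless g sigma_a g^dag and g sigma_a' g^dag are both diagonal; it is
   then
   Tr(Lambda(g)(rho) sigma_a sigma_a')
   = (-1)^beta(a,a') (sigma_{a+a'} | Lambda(g)(rho)), and
   sigma_a, sigma_a' commute.  Averaging over g produces r_{a,a'} Lambar_{a,a'}. *)

Lemma ord2P (s : 'I_2) : s = ord0 \/ s = ord_max.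
Proof. by case: s => [[|[|//]]] ?; [left|right]; apply: val_inj. Qed.

Ltac case_ord2 :=
  repeat match goal with s : 'I_2 |- _ => have [E|E] := ord2P s; subst s end.

Lemma real_root4 {C : numClosedFieldType} (x : C) :
  x^* = x -> x ^+ 4 = 1 -> (x == 1) || (x == -1).
Proof.
move=> /eqP; rewrite -CrealE => xR x4; rewrite -sqrf_eq1 -subr_eq0.
have x2_ge0 : 0 <= x ^+ 2 by apply: real_exprn_even_ge0.
have x2D1_neq0 : x ^+ 2 + 1 != 0 by rewrite gt_eqF // ltr_wpDl.
have : (x ^+ 2 - 1) * (x ^+ 2 + 1) == 0.
  have -> : (x ^+ 2 - 1) * (x ^+ 2 + 1) = x ^+ 4 - 1 by ring.
  by rewrite x4 subrr.
by rewrite mulf_eq0 (negPf x2D1_neq0) orbF.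
Qed.

Section SingleQubit.
Variable C : numClosedFieldType.

Ltac conj_simpl := rewrite ?rmorphN /= ?(conjC0, conjC1, conjCi, opprK, mul0r,
  mulr0, mul1r, mulr1, add0r, addr0, mulNr, mulrN, mulCii, subrr, addNr, oppr0).

Lemma pauli1_conj b s t : (pauli1 C b t s)^* = pauli1 C b s t.
Proof. by case_ord2; case: b => [[] []]; rewrite /pauli1 !mxE /=; conj_simpl. Qed.

Lemma pauli1_orthogonal b c :
  \sum_s \sum_t (pauli1 C b s t)^* * pauli1 C c s t = (b == c)%:R * 2.
Proof.
rewrite !big_ord_recl !big_ord0.
by case: b => [[] []]; case: c => [[] []]; rewrite /pauli1 !mxE /=; conj_simpl.
Qed.

Lemma pauli1_complete s t s' t' :
  \sum_b (pauli1 C b s t)^* * pauli1 C b s' t' = ((s == s') && (t == t'))%:R * 2.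
Proof.
pose F b1 b2 := (pauli1 C (b1, b2) s t)^* * pauli1 C (b1, b2) s' t'.
rewrite (eq_bigr (fun b => F b.1 b.2)); last by case.
by rewrite -pair_bigA !big_bool /= /F; case_ord2; rewrite /pauli1 !mxE /=; conj_simpl.
Qed.

Definition qubit_add (b c : bool * bool) := (xorb b.1 c.1, xorb b.2 c.2).

Definition qubit_phase (b c : bool * bool) : C :=
  match b, c with
  | (false, true), (true, true) | (true, true), (true, false)
  | (true, false), (false, true) => 'i
  | (true, true), (false, true) | (true, false), (true, true)
  | (false, true), (true, false) => - 'i
  | _, _ => 1
  end.

Lemma pauli1_mul b c s u :
  \sum_t pauli1 C b s t * pauli1 C c t u = qubit_phase b c * pauli1 C (qubit_add b c) s u.
Proof.
rewrite !big_ord_recl big_ord0.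
by case_ord2; case: b => [[] []]; case: c => [[] []]; rewrite /pauli1 !mxE /=; conj_simpl.
Qed.

Lemma qubit_phase_root4 b c : qubit_phase b c ^+ 4 = 1.
Proof.
have sq4 (z : C) : z ^+ 2 = -1 -> z ^+ 4 = 1.
  by move=> z2; rewrite -[4%N]/(2 * 2)%N exprM z2 sqrrN expr1n.
have i4 : 'i ^+ 4 = 1 :> C by apply/sq4/sqrCi.
have Ni4 : (- 'i) ^+ 4 = 1 :> C by apply/sq4; rewrite sqrrN sqrCi.
by case: b => [[] []]; case: c => [[] []]; rewrite /= ?expr1n.
Qed.

Lemma pauli1_diag_flip (b : bool * bool) s : b.2 -> pauli1 C b s s = 0.
Proof. by case_ord2; case: b => [[] []] //= _; rewrite /pauli1 !mxE. Qed.

Lemma pauli1_offdiag_noflip (b : bool * bool) s t : ~~ b.2 -> s != t -> pauli1 C b s t = 0.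
Proof. by case: b => [[] []] //= _ /negPf st; rewrite /pauli1 !mxE st. Qed.

End SingleQubit.

Lemma binary_digits_inj m i j : (i < 2 ^ m)%N -> (j < 2 ^ m)%N ->
  (forall k, (k < m)%N -> odd (i %/ 2 ^ k) = odd (j %/ 2 ^ k)) -> i = j.
Proof.
elim: m i j => [|m IHm] i j ilt jlt digits_eq.
  by move: ilt jlt; rewrite expn0 !ltnS !leqn0 => /eqP-> /eqP->.
have odd_eq := digits_eq 0%N (ltn0Sn _); rewrite expn0 !divn1 in odd_eq.
have half_eq : i./2 = j./2.
  apply: IHm; rewrite -?divn2 ?ltn_divLR -?expnSr // => k klt.
  by rewrite -!divnMA -!expnS; apply: digits_eq.
by rewrite -(odd_double_half i) -(odd_double_half j) odd_eq half_eq.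
Qed.

Section QubitBits.
Context {n : nat}.

Definition qbits (i : 'I_(qdim n)) : {ffun 'I_n -> 'I_2} := [ffun k => qbit i k].

Lemma qbits_inj : injective qbits.
Proof.
move=> i j /ffunP qbits_eq; apply/val_inj/(@binary_digits_inj n); rewrite ?ltn_ord //.
move=> k klt; have := qbits_eq (Ordinal klt); rewrite !ffunE /qbit.
by move=> /(congr1 val); rewrite /= !inordK //; do 2 case: odd.
Qed.

Lemma qbits_bij : bijective qbits.
Proof. by apply: inj_card_bij qbits_inj _; rewrite card_ffun !card_ord. Qed.

Lemma reindex_qbits (R : nmodType) (F : {ffun 'I_n -> 'I_2} -> R) :
  \sum_(i : 'I_(qdim n)) F (qbits i) = \sum_u F u.
Proof. by rewrite (reindex qbits) //; apply: onW_bij qbits_bij. Qed.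

Lemma eq_qbits2 (i j k l : 'I_(qdim n)) :
  [forall q, (qbits i q == qbits k q) && (qbits j q == qbits l q)] = (i == k) && (j == l).
Proof.
apply/forallP/andP => [eq_ikjl | [/eqP-> /eqP->] q]; last by rewrite !eqxx.
by split; apply/eqP/qbits_inj/ffunP => q; have /andP[/eqP ? /eqP ?] := eq_ikjl q.
Qed.
End QubitBits.

Section Pauli.
Context {C : numClosedFieldType} {n : nat}.
Local Notation Mat := (Mat C n).
Local Notation pauli := (pauli C).
Local Notation d := ((qdim n)%:R : C).
Implicit Types (A B : Mat) (a b : plabel n).

Lemma adjE A i j : adj A i j = (A j i)^*.
Proof. by rewrite !mxE. Qed.

Lemma adj_scale c A : adj (c *: A) = c^* *: adj A.
Proof. by apply/matrixP => i j; rewrite !(adjE, mxE) rmorphM. Qed.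

Lemma adjM A B : adj (A *m B) = adj B *m adj A.
Proof.
apply/matrixP => i j; rewrite adjE !mxE rmorph_sum; apply: eq_bigr => k _.
by rewrite rmorphM !adjE mulrC.
Qed.

Lemma hsE A B : hs A B = \sum_i \sum_j (A i j)^* * B i j.
Proof.
rewrite /hs /mxtrace exchange_big; apply: eq_bigr => j _; rewrite mxE.
by apply: eq_bigr => i _; rewrite adjE.
Qed.

Lemma hsZl c A B : hs (c *: A) B = c^* * hs A B.
Proof. by rewrite /hs adj_scale -scalemxAl mxtraceZ. Qed.

Lemma hsZr c A B : hs A (c *: B) = c * hs A B.
Proof. by rewrite /hs -scalemxAr mxtraceZ. Qed.

Lemma hs0r A : hs A 0 = 0.
Proof. by rewrite /hs mulmx0 mxtrace0. Qed.

Lemma hsDr A B B' : hs A (B + B') = hs A B + hs A B'.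
Proof. by rewrite /hs mulmxDr mxtraceD. Qed.

Lemma hs_sumr (J : finType) (P : pred J) A (F : J -> Mat) :
  hs A (\sum_(j | P j) F j) = \sum_(j | P j) hs A (F j).
Proof. exact: (big_morph _ (hsDr A) (hs0r A)). Qed.

Lemma hs_Eb A x : hs (Eb C x) A = A x x.
Proof.
rewrite hsE (bigD1 x) //= (bigD1 x) //= !mxE !eqxx conjC1 mul1r.
rewrite big1 => [|j /negPf nj]; last by rewrite !mxE nj andbF conjC0 mul0r.
rewrite big1 ?addr0 // => i /negPf ni.
by rewrite big1 // => j _; rewrite !mxE ni conjC0 mul0r.
Qed.

Lemma qdimE : d = 2 ^+ n.
Proof. by rewrite natrX. Qed.

Lemma qdim_neq0 : d != 0.
Proof. by rewrite pnatr_eq0 expn_eq0. Qed.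

Lemma pauliE a i j :
  pauli a i j = \prod_k pauli1 C (a k) (qbits i k) (qbits j k).
Proof. by rewrite mxE; apply: eq_bigr => k _; rewrite !ffunE. Qed.

Lemma sum_prod_qbits (f : 'I_n -> 'I_2 -> C) :
  \sum_(i : 'I_(qdim n)) \prod_k f k (qbits i k) = \prod_k \sum_s f k s.
Proof.
by rewrite (@reindex_qbits _ _ (fun u : {ffun _ -> _} => \prod_k f k (u k))) bigA_distr_bigA.
Qed.

Lemma sum2_prod_qbits (f : 'I_n -> 'I_2 -> 'I_2 -> C) :
  \sum_(i : 'I_(qdim n)) \sum_(j : 'I_(qdim n)) \prod_k f k (qbits i k) (qbits j k)
  = \prod_k \sum_s \sum_t f k s t.
Proof.
rewrite -(sum_prod_qbits (fun k s => \sum_t f k s t)); apply: eq_bigr => i _.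
exact: (sum_prod_qbits (fun k t => f k (qbits i k) t)).
Qed.

Lemma prod_indicator2 (c : 'I_n -> bool) :
  \prod_k ((c k)%:R * 2) = ([forall k, c k])%:R * d.
Proof.
rewrite big_split /= prodr_const card_ord qdimE; congr (_ * _).
have [/forallP c_all | /forallPn [k /negPf ck]] := boolP [forall k, c k].
  by rewrite big1 // => k _; rewrite c_all.
by rewrite (bigD1 k) //= ck mul0r.
Qed.

Lemma pauli_adj a : adj (pauli a) = pauli a.
Proof.
apply/matrixP => i j; rewrite adjE !pauliE rmorph_prod.
by apply: eq_bigr => k _; apply: pauli1_conj.
Qed.

Lemma hs_pauli a b : hs (pauli a) (pauli b) = (a == b)%:R * d.
Proof.
rewrite hsE.
under eq_bigr => i _ do under eq_bigr => j _ do rewrite !pauliE rmorph_prod -big_split.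
rewrite (sum2_prod_qbits (fun k s t => (pauli1 C (a k) s t)^* * pauli1 C (b k) s t)).
under eq_bigr => k _ do rewrite pauli1_orthogonal.
rewrite prod_indicator2; congr ((nat_of_bool _)%:R * _).
by apply/forallP/eqP => [eq_ab | -> //]; apply/ffunP => k; apply/eqP.
Qed.

Lemma pauli_neq0 a : pauli a != 0.
Proof.
apply/eqP => pa0; have := hs_pauli a a.
by rewrite {2}pa0 hs0r eqxx mul1r => /esym/eqP; rewrite (negPf qdim_neq0).
Qed.

Lemma pauli_sign_inj (e : bool) a b : pauli a = (-1) ^+ e *: pauli b -> a = b.
Proof.
move=> pa; apply/eqP; apply: contraTT qdim_neq0 => neq_ab; have := hs_pauli a a.
by rewrite {2}pa hsZr hs_pauli (negPf neq_ab) eqxx /= mul0r mulr0 mul1r => <-; rewrite eqxx.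
Qed.

Lemma sum_pauli_conj_mul i j k l :
  \sum_(a : plabel n) (pauli a i j)^* * pauli a k l = ((i == k) && (j == l))%:R * d.
Proof.
under eq_bigr => a _ do rewrite !pauliE rmorph_prod -big_split.
rewrite -(bigA_distr_bigA (fun q (b : bool * bool) =>
  (pauli1 C b (qbits i q) (qbits j q))^* * pauli1 C b (qbits k q) (qbits l q))).
under eq_bigr => q _ do rewrite pauli1_complete.
by rewrite prod_indicator2 eq_qbits2.
Qed.

Lemma pauli_expansion A : A = d^-1 *: \sum_(a : plabel n) hs (pauli a) A *: pauli a.
Proof.
apply/matrixP => k l; rewrite mxE summxE; apply: (mulIf qdim_neq0).
rewrite [LHS]mulrC mulrAC mulVf ?qdim_neq0 // mul1r.
transitivity (\sum_(a : plabel n) \sum_i \sum_j (pauli a i j)^* * pauli a k l * A i j); last first.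
  apply: eq_bigr => a _; rewrite [RHS]mxE hsE mulr_suml; apply: eq_bigr => i _.
  by rewrite mulr_suml; apply: eq_bigr => j _; rewrite mulrAC.
rewrite exchange_big; under eq_bigr => i _ do rewrite exchange_big.
under eq_bigr => i _ do under eq_bigr => j _ do rewrite -mulr_suml sum_pauli_conj_mul.
rewrite (bigD1 k) //= (bigD1 l) //= !eqxx mul1r !big1 ?addr0 // => [i ik | j jl].
  by rewrite big1 // => j _; rewrite (negPf ik) mul0r mul0r.
by rewrite (negPf jl) andbF mul0r mul0r.
Qed.
End Pauli.

Lemma eq_oppv_self (R : numFieldType) (V : lmodType R) (v : V) : (v == - v) = (v == 0).
Proof. by rewrite -addr_eq0 -mulr2n -scaler_nat scaler_eq0 pnatr_eq0. Qed.

Definition pauli_phase (C : numClosedFieldType) {n} (a b : plabel n) : C :=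
  \prod_k qubit_phase C (a k) (b k).

Section PauliProduct.
Context {C : numClosedFieldType} {n : nat}.
Local Notation pauli := (pauli C).
Implicit Types a b : plabel n.

Lemma pauli_mul a b : pauli a *m pauli b = pauli_phase C a b *: pauli (padd a b).
Proof.
apply/matrixP => i j; rewrite mxE [RHS]mxE.
under eq_bigr => t _ do rewrite !pauliE -big_split.
rewrite pauliE (sum_prod_qbits (fun k s =>
  pauli1 C (a k) (qbits i k) s * pauli1 C (b k) s (qbits j k))).
under eq_bigr => k _ do rewrite pauli1_mul.
under [in RHS]eq_bigr => k _ do rewrite ffunE.
by rewrite big_split.
Qed.

Lemma pauli_phase_root4 a b : pauli_phase C a b ^+ 4 = 1.
Proof. by rewrite -prodrXl; apply: big1 => k _; apply: qubit_phase_root4. Qed.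

(* For commuting a, b the product is Hermitian, so its phase, a fourth root of
   unity, is real. *)
Lemma pauli_comm_mul a b : pcomm C a b ->
  pauli a *m pauli b = (-1) ^+ pbeta C a b *: pauli (padd a b).
Proof.
move=> /eqP ab_comm; have ab_mul := pauli_mul a b.
have phase_real : (pauli_phase C a b)^* = pauli_phase C a b.
  have : adj (pauli a *m pauli b) = pauli a *m pauli b by rewrite adjM !pauli_adj ab_comm.
  rewrite ab_mul adj_scale pauli_adj => /eqP; rewrite -subr_eq0 -scalerBl scaler_eq0.
  by rewrite (negPf (pauli_neq0 _)) orbF subr_eq0 => /eqP.
rewrite /pbeta ab_mul.
have /orP[/eqP-> | /eqP->] := real_root4 _ phase_real (pauli_phase_root4 a b).
  by rewrite scale1r eq_oppv_self (negPf (pauli_neq0 _)) expr0 scale1r.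
by rewrite scaleN1r eqxx expr1 scaleN1r.
Qed.
End PauliProduct.

Section Conjugation.
Context {C : numClosedFieldType} {n : nat}.
Local Notation Mat := (Mat C n).
Implicit Types A B : Mat.

Lemma omegaZ (g : Mat) c A : omega g (c *: A) = c *: omega g A.
Proof. by rewrite /omega -scalemxAr -scalemxAl. Qed.

Lemma omegaDZ (g : Mat) c A : omegaD g (c *: A) = c *: omegaD g A.
Proof. by rewrite /omegaD -scalemxAr -scalemxAl. Qed.

Context {g : Mat} (g_unitary : unitary_mat g).
Let ggV : g *m adj g = 1%:M := proj1 g_unitary.
Let gVg : adj g *m g = 1%:M := proj2 g_unitary.

Lemma omegaDK A : omegaD g (omega g A) = A.
Proof. by rewrite /omegaD /omega !mulmxA gVg mul1mx -mulmxA gVg mulmx1. Qed.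

Lemma omegaK A : omega g (omegaD g A) = A.
Proof. by rewrite /omegaD /omega !mulmxA ggV mul1mx -mulmxA ggV mulmx1. Qed.

Lemma omegaM A B : omega g A *m omega g B = omega g (A *m B).
Proof. by rewrite /omega !mulmxA -[_ *m adj g *m g]mulmxA gVg mulmx1. Qed.

Lemma omegaDM A B : omegaD g A *m omegaD g B = omegaD g (A *m B).
Proof. by rewrite /omegaD !mulmxA -[_ *m g *m adj g]mulmxA ggV mulmx1. Qed.

Lemma mxtrace_omega A : \tr (omega g A) = \tr A.
Proof. by rewrite /omega mxtrace_mulC mulmxA gVg mul1mx. Qed.
End Conjugation.

Definition Xi_label {C : numClosedFieldType} {n} (h : Mat C n) (a : plabel n) : bool :=
  [exists z, Xi z h a].

Lemma Zlabel_inj n : injective (@Zlabel n).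
Proof. by move=> z z' /ffunP eq_zz'; apply/ffunP => k; have := eq_zz' k; rewrite !ffunE => -[]. Qed.

Section Clifford.
Context {C : numClosedFieldType} {n : nat}.
Local Notation Mat := (Mat C n).
Local Notation pauli := (pauli C).
Implicit Types a b : plabel n.

Lemma pauli_diag_flip a x : [exists k, (a k).2] -> pauli a x x = 0.
Proof. by case/existsP => k ak; rewrite pauliE (bigD1 k) //= pauli1_diag_flip ?mul0r. Qed.

Lemma Zop_is_diag (z : {ffun 'I_n -> bool}) : is_diag_mx (Zop C z).
Proof.
apply/is_diag_mxP => x y neq_xy.
have /existsP[k neq_k] : [exists k, qbits x k != qbits y k].
  rewrite -negb_forall; apply: contra neq_xy => /forallP eq_bits.
  by rewrite (@qbits_inj _ x y) //; apply/ffunP => k; apply/eqP.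
by rewrite pauliE (bigD1 k) //= pauli1_offdiag_noflip ?mul0r // ffunE.
Qed.

Context {g : Mat} (g_clifford : clifford g).
Let g_unitary : unitary_mat g := proj1 g_clifford.

Lemma clifford_omega_pauli a : exists b (e : bool), omega g (pauli a) = (-1) ^+ e *: pauli b.
Proof.
have [b [ga | ga]] := proj2 g_clifford a; exists b.
  by exists false; rewrite scale1r.
by exists true; rewrite scaleN1r.
Qed.

Lemma XiP z a : reflect (exists e : bool, omega g (pauli a) = (-1) ^+ e *: Zop C z) (Xi z g a).
Proof.
apply: (iffP orP) => [[] /eqP Za | [e ga]].
- by exists false; rewrite scale1r -Za (omegaK g_unitary).
- by exists true; rewrite scaleN1r -[pauli a]opprK -Za -mulNmx -mulmxN (omegaK g_unitary).
- have Za : omegaD g (Zop C z) = (-1) ^+ e *: pauli a.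
    by rewrite -(omegaDK g_unitary (pauli a)) ga omegaDZ scalerA -signr_addb addbb scale1r.
  by case: e {ga} Za => Za; [right | left]; apply/eqP; rewrite -/(omegaD g _) Za ?scaleN1r ?scale1r.
Qed.

Lemma Xi_uniq z z' a : Xi z g a -> Xi z' g a -> z = z'.
Proof.
move=> /XiP[e ga] /XiP[e' ga']; apply/Zlabel_inj/(@pauli_sign_inj C _ (e (+) e')).
rewrite -/(Zop C z) -/(Zop C z') signr_addb -scalerA -ga' ga scalerA.
by rewrite -signr_addb addbb scale1r.
Qed.

Lemma omega_pauli_diag0 a x : ~~ Xi_label g a -> omega g (pauli a) x x = 0.
Proof.
move=> not_Xi; have [b [e ga]] := clifford_omega_pauli a; rewrite ga mxE.
have [flip | /existsPn noflip] := boolP [exists k, (b k).2].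
  by rewrite pauli_diag_flip ?mulr0.
have Zb : Zlabel [ffun k => (b k).1] = b.
  by apply/ffunP => k; rewrite !ffunE; move: (noflip k); case: (b k) => ? [].
case/existsP: not_Xi; exists [ffun k => (b k).1]; apply/XiP; exists e.
by rewrite /Zop Zb.
Qed.

Lemma omega_pauli_is_diag a : Xi_label g a -> is_diag_mx (omega g (pauli a)).
Proof.
case/existsP => z /XiP[e ->]; apply/is_diag_mxP => x y neq_xy.
by rewrite mxE (is_diag_mxP (Zop_is_diag z)) ?mulr0.
Qed.

Lemma Xi_label_pcomm a a' : Xi_label g a -> Xi_label g a' -> pcomm C a a'.
Proof.
move=> /omega_pauli_is_diag/diag_mxP[d gad] /omega_pauli_is_diag/diag_mxP[d' gad'].
apply/eqP; rewrite -(omegaDK g_unitary (pauli a)) -(omegaDK g_unitary (pauli a')).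
by rewrite !(omegaDM g_unitary) gad gad' diag_mxC.
Qed.

Lemma sum_omega_pauli_diag2 a a' Y :
  \sum_x omega g Y x x * (omega g (pauli a) x x * omega g (pauli a') x x) =
  if Xi_label g a && Xi_label g a' then
    (-1) ^+ pbeta C a a' * hs (pauli (padd a a')) Y
  else 0.
Proof.
have [Xa | nXa] := boolP (Xi_label g a); last first.
  by rewrite big1 // => x _; rewrite omega_pauli_diag0 // mul0r mulr0.
have [Xa' | nXa'] := boolP (Xi_label g a'); last first.
  by rewrite big1 // => x _; rewrite (omega_pauli_diag0 a') // !mulr0.
have /diag_mxP[d gad] := omega_pauli_is_diag _ Xa.
have /diag_mxP[d' gad'] := omega_pauli_is_diag _ Xa'.
transitivity (\tr (omega g Y *m (omega g (pauli a) *m omega g (pauli a')))).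
  rewrite gad gad' mulmx_diag mul_mx_diag; apply: eq_bigr => x _.
  by rewrite !mxE !eqxx !mulr1n.
rewrite !(omegaM g_unitary) (mxtrace_omega g_unitary) pauli_comm_mul ?Xi_label_pcomm //.
by rewrite -scalemxAr mxtraceZ mxtrace_mulC /hs pauli_adj.
Qed.
End Clifford.

Section Measurement.
Context {C : numClosedFieldType} {n : nat}.
Local Notation Mat := (Mat C n).
Implicit Types (A B : Mat) (a : plabel n) (x : 'I_(qdim n)).

Lemma Mmeas_diag_mx A : Mmeas A = diag_mx (\row_x A x x).
Proof. by rewrite diag_mx_sum_delta; apply: eq_bigr => x _; rewrite hs_Eb mxE. Qed.

Lemma Mmeas_id A : is_diag_mx A -> Mmeas A = A.
Proof.
case/diag_mxP => d ->; rewrite Mmeas_diag_mx; congr diag_mx.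
by apply/rowP => x; rewrite !mxE eqxx.
Qed.

Lemma Mmeas_diag0 A : (forall x, A x x = 0) -> Mmeas A = 0.
Proof. by move=> A_diag0; rewrite /Mmeas big1 // => x _; rewrite hs_Eb A_diag0 scale0r. Qed.

Lemma MmeasD A B : Mmeas (A + B) = Mmeas A + Mmeas B.
Proof. by rewrite /Mmeas -big_split; apply: eq_bigr => x _; rewrite hsDr scalerDl. Qed.

Lemma MmeasZ c A : Mmeas (c *: A) = c *: Mmeas A.
Proof. by rewrite /Mmeas scaler_sumr; apply: eq_bigr => x _; rewrite hsZr scalerA. Qed.

Lemma adj_Eb x : adj (Eb C x) = Eb C x.
Proof. by apply/matrixP => i j; rewrite adjE !mxE rmorph_nat andbC. Qed.

Lemma hs_pauli_omegaD_Eb (h : Mat) a x :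
  hs (pauli C a) (omegaD h (Eb C x)) = omega h (pauli C a) x x.
Proof.
rewrite /hs pauli_adj /omegaD !mulmxA mxtrace_mulC !mulmxA -/(omega _ _).
by rewrite mxtrace_mulC -adj_Eb -/(hs _ _) hs_Eb.
Qed.
End Measurement.

Lemma sum_unique_witness (V : nmodType) (J Z : finType) (P : J -> Z -> bool) (F : J -> V) :
  (forall j z z', P j z -> P j z' -> z = z') ->
  \sum_z \sum_(j | P j z) F j = \sum_(j | [exists z, P j z]) F j.
Proof.
move=> P_uniq; rewrite (exchange_big_dep (fun j => [exists z, P j z])).
  apply: eq_bigr => j /existsP[z0 Pjz0]; apply: big_pred1 => z /=.
  by apply/idP/eqP => [Pjz | ->]; first exact: P_uniq Pjz Pjz0.
by move=> z j _ Pjz; apply/existsP; exists z.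
Qed.

Lemma sum_unique_witness2 (V : nmodType) (J Z : finType) (P Q : J -> Z -> bool) (F : J -> V) :
  (forall j z z', P j z -> P j z' -> z = z') ->
  (forall j z z', Q j z -> Q j z' -> z = z') ->
  \sum_z \sum_z' \sum_(j | P j z && Q j z') F j =
  \sum_(j | [exists z, P j z] && [exists z, Q j z]) F j.
Proof.
move=> P_uniq Q_uniq; rewrite pair_bigA /= sum_unique_witness => [|j [z1 z1'] [z2 z2']].
  apply: eq_bigl => j; apply/existsP/andP => [[[z z'] /andP[Pz Qz']] | ].
    by split; apply/existsP; [exists z | exists z'].
  by case=> /existsP[z Pz] /existsP[z' Qz']; exists (z, z'); rewrite /= Pz Qz'.
by move=> /= /andP[P1 Q1] /andP[P2 Q2]; rewrite (P_uniq _ _ _ P1 P2) (Q_uniq _ _ _ Q1 Q2).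
Qed.

Lemma sum_weighted_square (R : comRingType) (J X A : finType) (c : J -> R) (m : J -> X -> R)
    (w : J -> A -> X -> R) (W : A -> R) :
  \sum_j c j * \sum_x m j x * (\sum_a w j a x * W a) ^+ 2 =
  \sum_a \sum_a' W a * W a' * \sum_j c j * \sum_x m j x * (w j a x * w j a' x).
Proof.
transitivity (\sum_j \sum_x \sum_a \sum_a' c j * m j x * (w j a x * W a) * (w j a' x * W a')).
  apply: eq_bigr => j _; rewrite mulr_sumr; apply: eq_bigr => x _.
  rewrite expr2 mulr_suml !mulr_sumr; apply: eq_bigr => a _.
  by rewrite !mulr_sumr; apply: eq_bigr => a' _; rewrite !mulrA.
transitivity (\sum_a \sum_a' \sum_j \sum_x c j * m j x * (w j a x * W a) * (w j a' x * W a')).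
  under eq_bigr => j _ do rewrite exchange_big.
  rewrite exchange_big; apply: eq_bigr => a _.
  under eq_bigr => j _ do rewrite exchange_big.
  by rewrite exchange_big.
apply: eq_bigr => a _; apply: eq_bigr => a' _; rewrite mulr_sumr; apply: eq_bigr => j _.
rewrite !mulr_sumr; apply: eq_bigr => x _; ring.
Qed.

Section SecondMoment.
Context {C : numClosedFieldType} {n : nat} {I : finType}.
Local Notation Mat := (Mat C n).
Local Notation pauli := (pauli C).
Local Notation d := ((qdim n)%:R : C).
Variables (p : I -> C) (g : I -> Mat) (Lam : I -> Mat -> Mat).
Hypothesis g_clifford : forall i, clifford (g i).
Implicit Types a : plabel n.

Local Notation Xi2 i a a' := (Xi_label (g i) a && Xi_label (g i) a').

Lemma s1_sum a : s1 p g a = \sum_(i | Xi_label (g i) a) p i.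
Proof. by apply: sum_unique_witness => i z z'; apply: (Xi_uniq (g_clifford i)). Qed.

Lemma r2_sum a a' : r2 p g a a' = \sum_(i | Xi2 i a a') p i.
Proof. by apply: sum_unique_witness2 => i z z'; apply: (Xi_uniq (g_clifford i)). Qed.

Lemma Lambar_sum a a' A :
  Lambar p g Lam a a' A = (r2 p g a a')^-1 *: \sum_(i | Xi2 i a a') p i *: Lam i A.
Proof. by rewrite /Lambar sum_unique_witness2 // => i z z'; apply: (Xi_uniq (g_clifford i)). Qed.

Lemma SframeD A B : Sframe p g (A + B) = Sframe p g A + Sframe p g B.
Proof.
rewrite /Sframe -big_split; apply: eq_bigr => i _.
by rewrite /omega /omegaD mulmxDr mulmxDl MmeasD mulmxDr mulmxDl scalerDr.
Qed.

Lemma SframeZ c A : Sframe p g (c *: A) = c *: Sframe p g A.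
Proof.
rewrite /Sframe scaler_sumr; apply: eq_bigr => i _.
by rewrite omegaZ MmeasZ omegaDZ !scalerA mulrC.
Qed.

Lemma Sframe0 : Sframe p g 0 = 0.
Proof. by rewrite -(scale0r (0 : Mat)) SframeZ !scale0r. Qed.

Lemma Sframe_pauli a : Sframe p g (pauli a) = s1 p g a *: pauli a.
Proof.
rewrite /Sframe s1_sum scaler_suml [RHS]big_mkcond; apply: eq_bigr => i _.
have gU := proj1 (g_clifford i).
have [Xa | nXa] := ifPn.
  by rewrite Mmeas_id ?(omegaDK gU) ?omega_pauli_is_diag.
rewrite Mmeas_diag0 => [|x]; last exact: omega_pauli_diag0.
by rewrite /omegaD mulmx0 mul0mx scaler0.
Qed.

Variable Sinv : Mat -> Mat.
Hypothesis SinvK : forall A, Sinv (Sframe p g A) = A.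

Lemma s1_neq0 a : s1 p g a != 0.
Proof.
apply/eqP => s1a0; have := pauli_neq0 (C := C) a.
by rewrite -[pauli a]SinvK Sframe_pauli s1a0 scale0r -{1}Sframe0 SinvK eqxx.
Qed.

Lemma Sinv_pauli_expansion (c : plabel n -> C) :
  Sinv (\sum_a c a *: pauli a) = \sum_a (c a / s1 p g a) *: pauli a.
Proof.
rewrite -[RHS]SinvK (big_morph _ SframeD Sframe0); congr Sinv.
by apply: eq_bigr => a _; rewrite SframeZ Sframe_pauli scalerA divfK ?s1_neq0.
Qed.

Variable O : Mat.
Local Notation weight a := (d^-1 / s1 p g a * hs O (pauli a)).

Lemma estimator_pauli i x :
  estimator g Sinv O i x = \sum_a omega (g i) (pauli a) x x * weight a.
Proof.
rewrite /estimator {1}(pauli_expansion (omegaD (g i) (Eb C x))) scaler_sumr.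
under eq_bigr => a _ do rewrite scalerA hs_pauli_omegaD_Eb.
by rewrite Sinv_pauli_expansion hs_sumr; apply: eq_bigr => a _; rewrite hsZr; ring.
Qed.

Variable rho : Mat.
Local Notation noise a a' := (\sum_(i | Xi2 i a a') p i *: Lam i rho).

Lemma second_moment_pauli :
  second_moment p g Lam Sinv O rho =
  \sum_a \sum_a' weight a * weight a' *
    ((-1) ^+ pbeta C a a' * hs (pauli (padd a a')) (noise a a')).
Proof.
rewrite /second_moment.
under eq_bigr => i _ do under eq_bigr => x _ do rewrite estimator_pauli.
rewrite sum_weighted_square; apply: eq_bigr => a _; apply: eq_bigr => a' _; congr (_ * _).
rewrite hs_sumr mulr_sumr [RHS]big_mkcond; apply: eq_bigr => i _.
rewrite /outprob (sum_omega_pauli_diag2 (g_clifford i)).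
by case: ifP => _; rewrite ?hsZr ?mulr0 // mulrCA.
Qed.

Lemma noise_noncomm a a' : ~~ pcomm C a a' -> noise a a' = 0.
Proof.
move=> ncomm; rewrite big_pred0 // => i; apply/negbTE.
by apply: contra ncomm => /andP[]; apply: (Xi_label_pcomm (g_clifford i)).
Qed.

Hypothesis p_ge0 : forall i, 0 <= p i.

Lemma noise_r2_eq0 a a' : r2 p g a a' = 0 -> noise a a' = 0.
Proof.
rewrite r2_sum => /(psumr_eq0P (fun i _ => p_ge0 i)) p0.
by apply: big1 => i /p0->; rewrite scale0r.
Qed.

Lemma second_moment_summand a a' :
  weight a * weight a' * ((-1) ^+ pbeta C a a' * hs (pauli (padd a a')) (noise a a')) =
  if pcomm C a a' then
    (sqrtC d)^-1 * (s2 p g a a' / (s1 p g a * s1 p g a') * hs O (npauli C a) *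
      hs O (npauli C a') * hs (npauli C (padd a a')) (Lambar p g Lam a a' rho))
  else 0.
Proof.
have [comm | ncomm] := ifPn; last by rewrite noise_noncomm // hs0r !mulr0.
have t_real : ((sqrtC d)^-1)^* = (sqrtC d)^-1.
  by rewrite geC0_conj // invr_ge0 sqrtC_ge0 ler0n.
have d_inv : d^-1 = (sqrtC d)^-1 ^+ 2 by rewrite exprVn sqrtCK.
(* If r_{a,a'} = 0 the noise sum is empty up to zero weights, which makes the
   junk value 0^-1 = 0 in Lambar harmless. *)
have rK : r2 p g a a' * (r2 p g a a')^-1 * hs (pauli (padd a a')) (noise a a') =
          hs (pauli (padd a a')) (noise a a').
  have [r0 | r_neq0] := eqVneq (r2 p g a a') 0; last by rewrite mulfV ?mul1r.
  by rewrite noise_r2_eq0 // hs0r !mulr0.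
rewrite Lambar_sum /s2 /npauli !hsZr hsZl t_real d_inv -[in LHS]rK invfM.
(* Abstracting the atoms stops [ring] from unfolding them. *)
move: (sqrtC d)^-1 (r2 p g a a') (hs _ (noise a a')) (s1 p g a) (s1 p g a')
  (hs O (pauli a)) (hs O (pauli a')) ((-1) ^+ pbeta C a a') => t r H s s' h h' e.
ring.
Qed.
End SecondMoment.

Theorem lemma5 (C : numClosedFieldType) (n : nat) (I : finType)
  (p : I -> C) (g : I -> Mat C n) (Lam : I -> Mat C n -> Mat C n)
  (Sinv : Mat C n -> Mat C n) (O rho : Mat C n) :
  (forall i, 0 <= p i) -> \sum_i p i = 1 ->
  (forall i, clifford (g i)) ->
  (forall i, linear (Lam i)) ->
  (forall A, Sinv (Sframe p g A) = A) -> (forall A, Sframe p g (Sinv A) = A) ->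
  herm_mat O -> density_mat rho ->
  second_moment p g Lam Sinv O rho =
  (sqrtC ((qdim n)%:R : C))^-1 *
    \sum_(a : plabel n) \sum_(a' : plabel n | pcomm C a a')
       (s2 p g a a' / (s1 p g a * s1 p g a')) * hs O (npauli C a) * hs O (npauli C a')
         * hs (npauli C (padd a a')) (Lambar p g Lam a a' rho).
Proof.
move=> p_ge0 _ g_clifford _ SinvK _ _ _.
rewrite second_moment_pauli // [RHS]mulr_sumr; apply: eq_bigr => a _.
rewrite [RHS]mulr_sumr [RHS]big_mkcond; apply: eq_bigr => a' _.
by rewrite second_moment_summand //; case: ifP.
Qed.
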